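(* Let $M$ be a magma satisfying the identities $(xy)z = xx$ and $x(yz) = xx$ for all $x,y,z\in M$. Then $M$ additionally satisfies $xx = yy$ for all $x,y\in M$ if and only if $M$ avoids the magma $2_{LZ}$ on $\{0,1\}$ with Cayley table \[ \begin{array}{c|cc} 2_{LZ} & 0 & 1 \\ \hline 0 & 0 & 0 \\ 1 & 1 & 1 \end{array} \] (i.e. $xy=x$ for all $x,y$).
   Context: A magma is a nonempty set with a binary operation, written by juxtaposition. A magma $M$ avoids a magma $F$ if no submagma of $M$ (nonempty subset closed under the operation, with the restricted operation) is isomorphic to $F$. *)

Record magma := Magma {
  carrier :> Type;
  op : carrier -> carrier -> carrier;
  elt : carrier  (* witness of nonemptiness *)
}.

Definition is_submagma (M : magma) (S : carrier M -> Prop) : Prop :=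
  (exists x, S x) /\ (forall x y, S x -> S y -> S (op M x y)).

Definition submagma_iso (F : Type) (opF : F -> F -> F)
  (M : magma) (S : carrier M -> Prop) : Prop :=
  exists f : F -> carrier M,
    (forall a, S (f a)) /\
    (forall a b, f a = f b -> a = b) /\
    (forall x, S x -> exists a, f a = x) /\
    (forall a b, f (opF a b) = op M (f a) (f b)).

Definition avoids (M : magma) (F : Type) (opF : F -> F -> F) : Prop :=
  ~ exists S, is_submagma M S /\ submagma_iso F opF M S.

(* The left-zero magma 2_LZ on {0,1} (= bool): x y = x. *)
Definition LZ2_op (x y : bool) : bool := x.

From Stdlib Require Import Classical.

(* Both elements of 2_LZ are idempotent, so a copy of it inside M exhibits two
   distinct squares.  Conversely, (xy)z = xx makes every square a left zero,
   and any two distinct left zeros {a, b} form a copy of 2_LZ. *)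

Lemma LZ2_copy_distinct_idempotents {M : magma} {S : carrier M -> Prop} :
  submagma_iso bool LZ2_op M S ->
  exists a b : M, a <> b /\ op M a a = a /\ op M b b = b.
Proof.
  intros [f [_ [f_inj [_ f_op]]]].
  exists (f true), (f false); repeat split.
  - intros E; apply f_inj in E; discriminate.
  - symmetry; apply (f_op true true).
  - symmetry; apply (f_op false false).
Qed.

Lemma avoids_LZ2_of_const_squares (M : magma) :
  (forall x y : M, op M x x = op M y y) -> avoids M bool LZ2_op.
Proof.
  intros sq [S [_ iso]].
  destruct (LZ2_copy_distinct_idempotents iso) as [a [b [ab [aa bb]]]].
  apply ab; rewrite <- aa, <- bb; apply sq.
Qed.

Lemma left_zeros_span_LZ2 {M : magma} {a b : M} :
  a <> b -> (forall z, op M a z = a) -> (forall z, op M b z = b) ->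
  exists S, is_submagma M S /\ submagma_iso bool LZ2_op M S.
Proof.
  intros ab a_lz b_lz.
  exists (fun z => z = a \/ z = b); split.
  - split; [exists a; now left |].
    intros u v [-> | ->] _; [left; apply a_lz | right; apply b_lz].
  - exists (fun t : bool => if t then a else b); repeat split.
    + intros [|]; [left | right]; reflexivity.
    + intros [|] [|] E; trivial; exfalso; apply ab; [exact E | symmetry; exact E].
    + intros z [-> | ->]; [exists true | exists false]; reflexivity.
    + intros [|] c; unfold LZ2_op; symmetry; [apply a_lz | apply b_lz].
Qed.

Theorem mainTheorem1 (M : magma)
  (H1 : forall x y z : M, op M (op M x y) z = op M x x)
  (H2 : forall x y z : M, op M x (op M y z) = op M x x) :
  (forall x y : M, op M x x = op M y y) <-> avoids M bool LZ2_op.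
Proof.
  split; [apply avoids_LZ2_of_const_squares |].
  intros avoid x y.
  apply NNPP; intros xy.
  apply avoid, (left_zeros_span_LZ2 xy).
  - intros z; apply H1.
  - intros z; apply H1.
Qed.
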